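(* For all integers $n\ge0$ and $d\ge1$, \[ \sum_{n_1>n_2>\cdots>n_d>n}\frac{a_{n_1}}{(2n_1-1)\cdots(2n_d-1)}=a_n . \]
   Context: $a_0=1$ and $a_n=\frac{1}{4^n}\binom{2n}{n}$ for $n\ge1$. *)

From HB Require Import structures.
From mathcomp Require Import all_boot all_order all_algebra.
From mathcomp Require Import all_classical all_reals all_analysis.
Set Implicit Arguments. Unset Strict Implicit. Unset Printing Implicit Defensive.
Import Order.TTheory GRing.Theory Num.Theory.
Local Open Scope ring_scope.

Definition a_seq (R : realType) (n : nat) : R :=
  if n is 0 then 1 else ('C(2 * n, n))%:R / 4 ^+ n.

(* Since a_m / a_(m-1) = (2m-1)/(2m), one has a_m / (2m-1) = a_(m-1) - a_m, so for
   d = 1 the sum over n_1 > n telescopes to a_n - lim a_m = a_n; the limit is 0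
   because a_m^2 (2m+1) <= 1.  For larger d, fix the smallest index n_d = m: by
   induction the sum over n_1 > ... > n_(d-1) > m is a_m / (2m-1) times the
   outer factor, and the remaining sum over m > n is the case d = 1. *)

From HB Require Import structures.
From mathcomp Require Import all_boot all_order all_algebra.
From mathcomp Require Import all_classical all_reals all_analysis.
From mathcomp Require Import ring lra zify.
Import Order.TTheory GRing.Theory Num.Theory.
Local Open Scope classical_set_scope.
Local Open Scope ring_scope.

Lemma mul_central_binS m :
  (m.+1 * 'C((m.+1).*2, m.+1) = 2 * m.*2.+1 * 'C(m.*2, m))%N.
Proof.
have diag := mul_bin_diag (m.*2.+2) m.
have down := mul_bin_down (m.*2.+1) m.
rewrite /= (_ : m.*2.+1 - m = m.+1)%N in down; last by lia.
rewrite doubleS -diag.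
apply/eqP; rewrite -(eqn_pmul2r (ltn0Sn m)); apply/eqP.
by rewrite -mulnA (mulnC 'C(_, m)) -down; lia.
Qed.

Definition decreasing_above d k : set ('I_d -> nat) :=
  [set t | (forall i j : 'I_d, (i < j)%N -> (t j < t i)%N) /\
           (forall i, (k < t i)%N)].

Definition snoc_fun {d} (t : 'I_d -> nat) (m : nat) : 'I_d.+1 -> nat :=
  fun i => if unlift ord_max i is Some j then t j else m.

Lemma snoc_fun_lift d (t : 'I_d -> nat) m j : snoc_fun t m (lift ord_max j) = t j.
Proof. by rewrite /snoc_fun liftK. Qed.

Lemma snoc_fun_max d (t : 'I_d -> nat) m : snoc_fun t m ord_max = m.
Proof. by rewrite /snoc_fun unlift_none. Qed.

Lemma decreasing_above1_bij k :
  set_bij [set m | (k < m)%N] (decreasing_above 1 k) (fun m _ => m).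
Proof.
split.
- by move=> m km; split=> [i j|//]; rewrite !ord1.
- by move=> m1 m2 _ _ /(congr1 (fun t => t ord0)).
- move=> t [_ t_gt]; exists (t ord0); first exact: t_gt.
  by apply: funext => i; rewrite (ord1 i).
Qed.

Lemma snoc_fun_bij d k :
  set_bij ([set m | (k < m)%N] `*`` decreasing_above d) (decreasing_above d.+1 k)
          (fun p => snoc_fun p.2 p.1).
Proof.
split.
- move=> [m t] [/= km [t_decr t_gt]]; split=> [i j|i].
    case: (unliftP ord_max j) => [j'|] -> ; case: (unliftP ord_max i) => [i'|] -> // ij.
    + by rewrite !snoc_fun_lift; apply: t_decr; rewrite !lift_max in ij.
    + by move: ij; rewrite lift_max /= ltnNge ltnW.
    + by rewrite snoc_fun_max snoc_fun_lift t_gt.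
    + by rewrite ltnn in ij.
  case: (unliftP ord_max i) => [i'|] ->; rewrite ?snoc_fun_lift ?snoc_fun_max //.
  exact: ltn_trans km (t_gt i').
- move=> [m1 t1] [m2 t2] _ _ /= eq_snoc.
  have /= := congr1 (fun t => t ord_max) eq_snoc; rewrite !snoc_fun_max => ->.
  congr pair; apply: funext => i.
  by have /= := congr1 (fun t => t (lift ord_max i)) eq_snoc; rewrite !snoc_fun_lift.
- move=> t [t_decr t_gt]; exists (t ord_max, fun i => t (lift ord_max i)).
    split=> [|/=]; first exact: t_gt.
    split=> [i j ij|i]; last by apply: t_decr; rewrite lift_max.
    by apply: t_decr; rewrite !lift_max.
  apply: funext => i /=.
  by case: (unliftP ord_max i) => [j|] ->; rewrite ?snoc_fun_lift ?snoc_fun_max.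
Qed.

Section CentralBinomialSums.
Variable R : realType.

Lemma esum_telescope (u : R^nat) k :
  (forall m, u m.+1 <= u m) -> u @ \oo --> 0 ->
  \esum_(m in [set m | (k < m)%N]) (u m.-1 - u m)%:E = (u k)%:E.
Proof.
move=> u_noninc u0.
rewrite -nneseries_esum => [|[|m] _]; last 2 first.
- by rewrite subrr.
- by rewrite lee_fin subr_ge0.
have partial p : \sum_(0 <= i < p + k.+1 | (k < i)%N) (u i.-1 - u i)%:E
                 = (u k - u (p + k)%N)%:E.
  rewrite [LHS](_ : _ = \sum_(k.+1 <= i < p + k.+1) (u i.-1 - u i)%:E); last first.
    by rewrite (@big_nat_widenl _ _ _ k.+1 0).
  rewrite sumEFin (telescope_sumr_eq (fun i => - u i.-1)) ?leq_addl //.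
    by rewrite addnS opprK addrC.
  by move=> [|i] _; rewrite opprK addrC.
apply: cvg_lim => //; rewrite -(cvg_shiftn k.+1) /=.
rewrite (funext partial); apply: cvg_EFin; first exact: nearW.
rewrite -[X in _ --> X]subr0; apply: cvgB; first exact: cvg_cst.
by rewrite (cvg_shiftn k).
Qed.

Local Notation a := (a_seq R).

Lemma a_seqE m : a m = 'C(m.*2, m)%:R / 4 ^+ m.
Proof. by case: m => [|m]; rewrite /= ?bin0 ?divr1 // -mul2n. Qed.

Lemma a_seq_ge0 m : 0 <= a m.
Proof. by rewrite a_seqE divr_ge0 // exprn_ge0. Qed.

Lemma a_seqS m : a m.+1 * (m.+1).*2%:R = a m * (m.*2.+1)%:R.
Proof.
have bin : (m.+1)%:R * 'C((m.+1).*2, m.+1)%:R = 2 * (m.*2.+1)%:R * 'C(m.*2, m)%:R :> R.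
  by rewrite -!natrM mul_central_binS.
rewrite !a_seqE.
transitivity ((m.+1)%:R * 'C((m.+1).*2, m.+1)%:R * 2 / 4 ^+ m.+1 : R).
  by rewrite -mul2n natrM; field; rewrite expf_neq0.
by rewrite bin exprS; field; rewrite expf_neq0.
Qed.

Lemma twice_natrS_sub1 m : 2 * (m.+1)%:R - 1 = (m.*2.+1)%:R :> R.
Proof. by rewrite -natrM mul2n doubleS -addn1 natrD addrK. Qed.

Lemma twice_natr_sub1_gt0 m : (0 < m)%N -> 0 < 2 * m%:R - 1 :> R.
Proof. by case: m => // m _; rewrite twice_natrS_sub1 ltr0Sn. Qed.

Lemma a_seq_telescope m : a m.+1 / (2 * (m.+1)%:R - 1) = a m - a m.+1.
Proof.
rewrite twice_natrS_sub1; apply: (@mulIf _ (m.*2.+1)%:R); first by rewrite pnatr_eq0.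
by rewrite divfK ?pnatr_eq0 // mulrBl -a_seqS doubleS mulrSr; ring.
Qed.

Lemma a_seq_nonincreasing m : a m.+1 <= a m.
Proof.
by rewrite -subr_ge0 -a_seq_telescope divr_ge0 ?a_seq_ge0 // twice_natrS_sub1.
Qed.

Lemma a_seq_sqr_bound m : a m ^+ 2 * (m.*2.+1)%:R <= 1.
Proof.
elim: m => [|m IH]; first by rewrite /a_seq expr1n mul1r.
apply: le_trans IH.
have aS : a m.+1 = a m * (m.*2.+1)%:R / (m.+1).*2%:R.
  by rewrite -a_seqS mulfK // pnatr_eq0 double_eq0.
rewrite aS expr_div_n mulrAC ler_pdivrMr ?exprn_gt0 ?ltr0n ?double_gt0 //.
rewrite doubleS !mulrSr.
have m2_ge0 : 0 <= (m.*2)%:R :> R := ler0n _ _.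
nra.
Qed.

Lemma a_seq_cvg0 : a @ \oo --> 0.
Proof.
apply/cvgr0Pnorm_lt => e e0.
have [B eB] : exists B : nat, e ^-2 < B%:R.
  by exists (Num.bound (e ^-2)); rewrite archi_boundP // invr_ge0 exprn_ge0 // ltW.
near=> m.
have Bm : (B <= m)%N by near: m; exact: nbhs_infty_ge.
rewrite ger0_norm ?a_seq_ge0 //.
have : a m ^+ 2 < e ^+ 2.
  rewrite -(@ltr_pM2r _ (m.*2.+1)%:R) ?ltr0Sn //.
  apply: (le_lt_trans (a_seq_sqr_bound m)); rewrite -ltr_pdivrMl ?exprn_gt0 // mulr1.
  by apply: (lt_le_trans eB); rewrite ler_nat; lia.
by rewrite ltr_pXn2r // ?nnegrE ?a_seq_ge0 ?ltW.
Unshelve. all: by end_near.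
Qed.

Lemma esum_a_seq_div k (c : R) : 0 <= c ->
  \esum_(m in [set m | (k < m)%N]) (c * (a m / (2 * m%:R - 1)))%:E = (c * a k)%:E.
Proof.
move=> c0; rewrite -(esum_telescope (fun m => c * a m)); last 2 first.
- by move=> m; rewrite ler_wpM2l ?a_seq_nonincreasing.
- by rewrite -(mulr0 c); apply: cvgMl_tmp; exact: a_seq_cvg0.
by apply: eq_esum => -[//|m] _; rewrite a_seq_telescope mulrBr.
Qed.

Definition chain_weight {d} (t : 'I_d.+1 -> nat) : R :=
  a (t ord0) / \prod_(i < d.+1) (2 * (t i)%:R - 1).

Lemma chain_weight_ge0 d k t : decreasing_above d.+1 k t -> 0 <= chain_weight t.
Proof.
move=> [_ t_gt]; rewrite divr_ge0 ?a_seq_ge0 // prodr_ge0 // => i _.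
by rewrite ltW // twice_natr_sub1_gt0 // (leq_ltn_trans _ (t_gt i)).
Qed.

Lemma chain_weight_snoc d (t : 'I_d.+1 -> nat) m :
  chain_weight (snoc_fun t m) = chain_weight t / (2 * m%:R - 1).
Proof.
have widen_lift (j : 'I_d.+1) : widen_ord (leqnSn d.+1) j = lift ord_max j.
  by apply: ord_inj; rewrite lift_max.
rewrite /chain_weight.
have -> : ord0 = lift ord_max ord0 :> 'I_d.+2 by apply: val_inj.
rewrite big_ord_recr /= snoc_fun_max snoc_fun_lift.
under eq_bigr do rewrite widen_lift snoc_fun_lift.
by rewrite invfM mulrA.
Qed.

Lemma esum_chain_weight d (c : R) k : 0 <= c ->
  \esum_(t in decreasing_above d.+1 k) (c * chain_weight t)%:E = (c * a k)%:E.
Proof.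
elim: d c k => [|d IH] c k c0.
  rewrite (reindex_esum _ _ _ _ (decreasing_above1_bij k)) -(esum_a_seq_div k c c0).
  by apply: eq_esum => m _; rewrite /chain_weight big_ord1.
rewrite (reindex_esum _ _ _ _ (snoc_fun_bij d.+1 k)) /=.
rewrite -(esum_esum (a := fun m t => (c * chain_weight (snoc_fun t m))%:E)); last first.
  have [maps_chain _ _] := snoc_fun_bij d.+1 k.
  move=> m t km t_chain; rewrite lee_fin mulr_ge0 //.
  by apply: (chain_weight_ge0 _ k); exact: (maps_chain (m, t)).
rewrite -(esum_a_seq_div k c c0); apply: eq_esum => m /= km.
under eq_esum do rewrite chain_weight_snoc mulrA mulrAC.
rewrite IH; first by congr EFin; rewrite mulrAC mulrA.
by rewrite divr_ge0 // ltW // twice_natr_sub1_gt0 // (leq_ltn_trans _ km).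
Qed.
End CentralBinomialSums.

Theorem corollary4p3 (R : realType) (n d : nat) (hd : (0 < d)%N) :
  \esum_(t in [set t : 'I_d -> nat |
                 (forall i j : 'I_d, (i < j)%N -> (t j < t i)%N) /\
                 (forall i : 'I_d, (n < t i)%N)])
     ((a_seq R (t (Ordinal hd)) / \prod_(i < d) (2 * (t i)%:R - 1))%:E)
  = (a_seq R n)%:E.
Proof.
case: d hd => // d hd; have -> : Ordinal hd = ord0 by apply: val_inj.
under eq_esum do rewrite -[X in X%:E]mul1r.
by rewrite (esum_chain_weight R d 1 n) ?mul1r.
Qed.
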